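(* Let $s$ be a positive integer, let $\lambda_0 \geq 0 > \lambda_1$ be real numbers and let $z_1, \ldots, z_{2s}$ be complex numbers with $z_j = a_j + b_j i$, $a_j \in \mathbb{R}$, $b_j > 0$ for $j = 1, \ldots, 2s$. If $\lambda_0 + \lambda_1 - 2\sum_{j=1}^{2s} |z_j| \geq 0$, then there is a $(4s+2) \times (4s+2)$ normal centrosymmetric nonnegative matrix with eigenvalues $\lambda_0, \lambda_1, z_1, \ldots, z_{2s}, \overline{z}_1, \ldots, \overline{z}_{2s}$.
   Context: $J$ denotes the reverse identity matrix of the appropriate size (ones on the anti-diagonal, zeros elsewhere). A square matrix $Q$ is centrosymmetric if $JQJ = Q$, nonnegative if all entries are nonnegative, and normal if $QQ^* = Q^*Q$. *)

From HB Require Import structures.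
From mathcomp Require Import all_boot all_order all_algebra.
From mathcomp Require Import reals.
From mathcomp.real_closed Require Import complex.
Set Implicit Arguments. Unset Strict Implicit. Unset Printing Implicit Defensive.
Import Order.TTheory GRing.Theory Num.Theory.
Local Open Scope ring_scope.

Definition revid (R : pzRingType) (n : nat) : 'M[R]_n :=
  \matrix_(i < n, j < n) ((i + j)%N == n.-1)%:R.

Definition centrosymmetric (R : pzRingType) (n : nat) (Q : 'M[R]_n) : Prop :=
  revid R n *m Q *m revid R n = Q.

Definition nonneg_mx (R : numDomainType) (m n : nat) (Q : 'M[R]_(m, n)) : Prop :=
  forall i j, 0 <= Q i j.

(* for a real matrix, Q^* is the transpose *)
Definition normal_real_mx (R : pzRingType) (n : nat) (Q : 'M[R]_n) : Prop :=
  Q *m Q^T = Q^T *m Q.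

(* the spectrum (with multiplicities) of a real matrix, viewed over R[i],
   is the multiset s : char_poly equals prod (X - x) *)
Definition has_spectrum (R : rcfType) (n : nat) (Q : 'M[R]_n) (s : seq R[i]) : Prop :=
  char_poly (map_mx (real_complex R) Q) = \prod_(x <- s) ('X - x%:P).

From HB Require Import structures.
From mathcomp Require Import all_boot all_order all_algebra fingroup perm.
From mathcomp Require Import cyclic separable cyclotomic.
From mathcomp Require Import reals ring lra zify.
From mathcomp.real_closed Require Import complex.
Set Implicit Arguments. Unset Strict Implicit. Unset Printing Implicit Defensive.
Import Order.TTheory GRing.Theory Num.Theory.
Local Open Scope ring_scope.

(* The matrix is a real circulant with its rows and columns reordered.  For a
   primitive n-th root of unity w, the circulant whose first row is the inverse
   discrete Fourier transform c_k = n^-1 sum_j lambda_j w^(jk) equals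
   F diag(lambda) F^-1 for the Fourier matrix F: its spectrum is (lambda_j),
   and it commutes with every circulant of the same kind, in particular with its
   transpose, which is its conjugate transpose since it is real whenever
   lambda_(-j) = conj lambda_j.  Placing l0 at frequency 0, l1 at frequency n/2
   and each z_j and its conjugate at opposite frequencies, the bound
   |Re (lambda_j w^(jk))| <= |lambda_j| gives n c_k >= l0 + l1 - 2 sum_j |z_j|
   >= 0.  Finally, reversing the order of the second half of the indices
   conjugates the exchange matrix J into the rotation by n/2, which fixes every
   circulant, so the reordered matrix is centrosymmetric. *)

Lemma closed_prim_root_exists (F : closedFieldType) n :
  (0 < n)%N -> n%:R != 0 :> F -> exists w : F, n.-primitive_root w.
Proof.
move=> n_gt0 nF_neq0.
have [rs def_p] := closed_field_poly_normal ('X^n - 1 : {poly F}).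
rewrite (monicP (monicXnsubC 1 n_gt0)) scale1r in def_p.
have rs_unity : all n.-unity_root rs.
  by apply/allP => x; rewrite -root_prod_XsubC -def_p.
have rs_uniq : uniq rs.
  by rewrite -separable_prod_XsubC -def_p separable_Xn_sub_1.
have rs_size : (n <= size rs)%N.
  by rewrite -ltnS -(size_prod_XsubC rs id) -def_p size_XnsubC.
have /hasP[w _ w_prim] := has_prim_root n_gt0 rs_unity rs_uniq rs_size.
by exists w.
Qed.

Lemma sum_unity_expr (R : idomainType) n (x : R) : x ^+ n = 1 ->
  \sum_(k < n) x ^+ k = if x == 1 then n%:R else 0.
Proof.
move=> xn1; have [->|x_neq1] := eqVneq x 1.
  by under eq_bigr do rewrite expr1n; rewrite sumr_const card_ord.
have : (x - 1) * \sum_(k < n) x ^+ k = 0 by rewrite -subrX1 xn1 subrr.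
by move/eqP; rewrite mulf_eq0 subr_eq0 (negPf x_neq1) => /eqP.
Qed.

Lemma unity_expr_subn (R : fieldType) n (x : R) k : x ^+ n = 1 -> (k <= n)%N ->
  x ^+ (n - k) = x ^- k.
Proof.
by move=> xn1 kn; apply/esym/mulr1_eq; rewrite -exprD subnKC.
Qed.

Lemma revidE (R : pzRingType) n (i j : 'I_n) : revid R n i j = (j == rev_ord i)%:R.
Proof.
have i_lt := ltn_ord i; have j_lt := ltn_ord j.
rewrite mxE (_ : (i + j == n.-1)%N = (j == rev_ord i)) //.
by apply/eqP/eqP => [e|->]; [apply: val_inj => /= | rewrite /=]; lia.
Qed.

Lemma mul_revid_mx (R : pzRingType) m n (A : 'M[R]_(m, n)) :
  revid R m *m A = \matrix_(i, j) A (rev_ord i) j.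
Proof.
apply/matrixP => i j; rewrite !mxE (bigD1 (rev_ord i)) //= revidE eqxx mul1r.
by rewrite big1 ?addr0 // => k /negPf k_neq; rewrite revidE k_neq mul0r.
Qed.

Lemma mul_mx_revid (R : pzRingType) m n (A : 'M[R]_(m, n)) :
  A *m revid R n = \matrix_(i, j) A i (rev_ord j).
Proof.
apply/matrixP => i j; rewrite !mxE (bigD1 (rev_ord j)) //= revidE rev_ordK eqxx mulr1.
rewrite big1 ?addr0 // => k k_neq.
by rewrite revidE -(inj_eq rev_ord_inj) rev_ordK eq_sym (negPf k_neq) mulr0.
Qed.

Lemma centrosymmetric_rev_ord (R : pzRingType) n (A : 'M[R]_n) :
  (forall i j, A (rev_ord i) (rev_ord j) = A i j) -> centrosymmetric A.
Proof. by move=> Arev; apply/matrixP => i j; rewrite mul_mx_revid mul_revid_mx !mxE Arev. Qed.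

Definition circulant (T : Type) n (c : nat -> T) : 'M[T]_n :=
  \matrix_(i, j) c ((j + n - i) %% n)%N.

Definition half_turn n h (s : 'I_n -> 'I_n) : Prop :=
  forall i, (s i = s (rev_ord i) + h :> nat \/ s (rev_ord i) = s i + h :> nat)%N.

Lemma circulant_half_turn (T : Type) n h (c : nat -> T) (s : 'I_n -> 'I_n) :
  n = (h + h)%N -> half_turn h s ->
  forall i j, circulant n c (s (rev_ord i)) (s (rev_ord j)) = circulant n c (s i) (s j).
Proof.
move=> n_eq s_rev i j; rewrite !mxE.
have [[[ri rj] si] sj] := (s_rev i, s_rev j, ltn_ord (s i), ltn_ord (s j)).
have [ri_lt rj_lt] := (ltn_ord (s (rev_ord i)), ltn_ord (s (rev_ord j))).
set x := (s (rev_ord j) + n - s (rev_ord i))%N; set y := (s j + n - s i)%N.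
have : x = y \/ x = (y + n)%N \/ y = (x + n)%N by rewrite /x /y; lia.
by case=> [->|[->|->]]; rewrite ?modnDr.
Qed.

Definition half_rev (h a : nat) : nat := if (a < h)%N then a else (3 * h - 1 - a)%N.

Lemma half_turn_perm_exists n h : n = (h + h)%N -> exists s : 'S_n, half_turn h s.
Proof.
move=> n_eq; have hr_lt a : (a < n)%N -> (half_rev h a < n)%N.
  by rewrite /half_rev; case: ifP; lia.
pose hr (a : 'I_n) := Ordinal (hr_lt a (ltn_ord a)).
have hrK : involutive hr.
  by move=> a; apply: val_inj; have := ltn_ord a; rewrite /= /half_rev; repeat case: ifP; lia.
exists (perm (can_inj hrK)) => a; have := ltn_ord a.
by rewrite !permE /= /half_rev; repeat case: ifP; lia.
Qed.

Lemma char_poly_conj (R : comNzRingType) n (P B A : 'M[R]_n) :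
  B *m P = 1%:M -> char_poly (P *m A *m B) = char_poly A.
Proof.
move=> BP; have PB := mulmx1C BP; rewrite /char_poly.
have -> : char_poly_mx (P *m A *m B) =
    map_mx polyC P *m char_poly_mx A *m map_mx polyC B.
  rewrite /char_poly_mx mulmxBr mulmxBl -!map_mxM mul_mx_scalar -scalemxAl.
  by rewrite -map_mxM PB map_mx1 scalemx1.
rewrite !det_mulmx mulrC mulrA -det_mulmx -map_mxM BP map_mx1.
by rewrite det1 mul1r.
Qed.

Lemma char_poly_perm (R : comNzRingType) n (s : 'S_n) (A : 'M[R]_n) :
  char_poly (row_perm s (col_perm s A)) = char_poly A.
Proof.
by rewrite row_permE col_permE mulmxA char_poly_conj // -perm_mxM mulVg perm_mx1.
Qed.

Lemma normal_real_mx_perm (R : comPzRingType) n (s : 'S_n) (A : 'M[R]_n) :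
  normal_real_mx A -> normal_real_mx (row_perm s (col_perm s A)).
Proof.
rewrite /normal_real_mx row_permE col_permE !trmx_mul !tr_perm_mx invgK => AAT.
have sK : perm_mx s^-1 *m perm_mx s = 1%:M :> 'M[R]_n by rewrite -perm_mxM mulVg perm_mx1.
by rewrite !mulmxA -!(mulmxA _ _ (perm_mx s)) !sK !mulmx1 -(mulmxA _ A) AAT mulmxA.
Qed.

Lemma normal_real_mx_map (F : fieldType) (S : comUnitRingType) n
    (f : {rmorphism F -> S}) (A : 'M[F]_n) :
  normal_real_mx (map_mx f A) -> normal_real_mx A.
Proof. by rewrite /normal_real_mx !map_trmx -!map_mxM => /map_mx_inj. Qed.

Definition fourier_mx (R : pzSemiRingType) n (u : R) : 'M[R]_n :=
  \matrix_(i, j) u ^+ (i * j).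

Lemma tr_fourier_mx (R : pzSemiRingType) n (u : R) : (fourier_mx n u)^T = fourier_mx n u.
Proof. by apply/matrixP => i j; rewrite !mxE mulnC. Qed.

Lemma map_fourier_mx (R S : pzSemiRingType) (f : {rmorphism R -> S}) n (u : R) :
  map_mx f (fourier_mx n u) = fourier_mx n (f u).
Proof. by apply/matrixP => i j; rewrite !mxE rmorphXn. Qed.

Lemma sum_opp_mod (V : nmodType) n (g : nat -> V) :
  \sum_(j < n) g ((n - j) %% n)%N = \sum_(j < n) g j.
Proof.
case: n => [|n]; first by rewrite !big_ord0.
rewrite !big_ord_recl subn0 modnn (reindex_inj rev_ord_inj); congr (_ + _).
apply: eq_bigr => j _; congr g; have := ltn_ord j.
by rewrite !lift0 /= => ?; rewrite modn_small; lia.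
Qed.

Lemma reindex_nat_inj (R : Type) (idx : R) (op : Monoid.com_law idx) n
    (f : nat -> nat) (F : nat -> R) :
  (forall j, (j < n)%N -> (f j < n)%N) ->
  (forall i j, (i < n)%N -> (j < n)%N -> f i = f j -> i = j) ->
  \big[op/idx]_(j < n) F (f j) = \big[op/idx]_(j < n) F j.
Proof.
move=> f_lt f_inj; pose g (j : 'I_n) := Ordinal (f_lt j (ltn_ord j)).
have g_inj : injective g.
  by move=> i j /(congr1 val) /= /f_inj eq_ij; apply/val_inj/eq_ij.
by rewrite [RHS](reindex_inj g_inj).
Qed.

Section DiscreteFourier.
Variables (F : fieldType) (n : nat) (w : F).
Hypotheses (w_prim : n.-primitive_root w) (n_neq0 : n%:R != 0 :> F).

Definition idft (lambda : nat -> F) (k : nat) : F :=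
  n%:R^-1 * \sum_(j < n) lambda j * w ^+ (j * k).

Let wn1 : w ^+ n = 1. Proof. exact: prim_expr_order. Qed.

Let w_neq0 : w != 0.
Proof. by rewrite (prim_root_eq0 w_prim) -lt0n (prim_order_gt0 w_prim). Qed.

Lemma mul_fourier_mx : fourier_mx n w *m fourier_mx n w^-1 = n%:R%:M.
Proof.
apply/matrixP => i j; rewrite !mxE.
under eq_bigr => k _ do rewrite !mxE [(k * j)%N]mulnC !exprM exprVn -exprMn.
rewrite sum_unity_expr; last first.
  by rewrite exprMn exprVn -!exprM !(mulnC _ n) !exprM wn1 !expr1n invr1 mulr1.
have wj_neq0 : w ^+ j != 0 by rewrite expf_neq0.
rewrite -(inj_eq (mulIf wj_neq0)) mul1r -mulrA mulVf // mulr1.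
by rewrite (eq_prim_root_expr w_prim) !modn_small // -(inj_eq val_inj); case: eqP.
Qed.

Lemma circulant_idftE lambda :
  circulant n (idft lambda) =
  fourier_mx n w^-1 *m diag_mx (\row_j lambda j) *m (n%:R^-1 *: fourier_mx n w).
Proof.
apply/matrixP => a b; rewrite !mxE /idft mulr_sumr; apply: eq_bigr => j _.
have wjn1 : (w ^+ j) ^+ n = 1 by rewrite -exprM mulnC exprM wn1 expr1n.
have a_le := ltnW (ltn_ord a).
rewrite mul_mx_diag !mxE exprM expr_mod // -addnBA // exprD unity_expr_subn //.
by rewrite -!exprM -exprVn (mulnC a); ring.
Qed.

Let fourier_mxK : (n%:R^-1 *: fourier_mx n w) *m fourier_mx n w^-1 = 1%:M.
Proof. by rewrite -scalemxAl mul_fourier_mx scale_scalar_mx mulVf. Qed.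

Lemma char_poly_circulant_idft lambda :
  char_poly (circulant n (idft lambda)) = \prod_(j < n) ('X - (lambda j)%:P).
Proof.
rewrite circulant_idftE char_poly_conj // char_poly_trig ?diag_mx_is_trig //.
by apply: eq_bigr => j _; rewrite !mxE eqxx mulr1n.
Qed.

Lemma circulant_idft_mulC lambda mu :
  circulant n (idft lambda) *m circulant n (idft mu) =
  circulant n (idft mu) *m circulant n (idft lambda).
Proof.
rewrite !circulant_idftE !mulmxA -!(mulmxA _ _ (fourier_mx n w^-1)) fourier_mxK !mulmx1.
rewrite -!(mulmxA (fourier_mx n w^-1)) !mulmx_diag.
by congr (_ *m (diag_mx _ *m _)); apply/rowP => j; rewrite !mxE mulrC.
Qed.

End DiscreteFourier.

Lemma real_complex_normc (R : rcfType) (x : R[i]) : real_complex R (Normc.normc x) = `|x|.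
Proof. by case: x => a b; rewrite normc_def. Qed.

Lemma normc_ge_absRe (R : rcfType) (x : R[i]) : `|complex.Re x| <= Normc.normc x.
Proof.
by case: x => a b /=; rewrite -sqrtr_sqr ler_sqrt ?addr_ge0 ?sqr_ge0 // lerDl sqr_ge0.
Qed.

Lemma Re_mul_real (R : rcfType) (r : R) (x : R[i]) :
  complex.Re (real_complex R r * x) = r * complex.Re x.
Proof. by case: x => a b /=; rewrite mul0r subr0. Qed.

Lemma normc_real (R : rcfType) (r : R) : Normc.normc (real_complex R r) = `|r|.
Proof. by rewrite /= expr0n addr0 sqrtr_sqr. Qed.

Lemma normc_conjc (R : rcfType) (x : R[i]) : Normc.normc (conjc x) = Normc.normc x.
Proof. by case: x => a b /=; rewrite sqrrN. Qed.

Lemma map_mx_real_complex_Re (R : rcfType) m n (A : 'M[R[i]]_(m, n)) :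
  map_mx conjc A = A -> map_mx (real_complex R) (map_mx (@complex.Re R) A) = A.
Proof.
move=> /matrixP A_real; apply/matrixP => i j; move: (A_real i j); rewrite !mxE.
by case: (A i j) => a b /= [] b_eq; have -> : b = 0 by lra.
Qed.

Definition conj_symmetric (R : rcfType) n (lambda : nat -> R[i]) : Prop :=
  forall j, (j < n)%N -> lambda ((n - j) %% n)%N = conjc (lambda j).

Section ComplexCirculant.
Variables (R : rcfType) (n : nat) (w : R[i]).
Hypothesis w_prim : n.-primitive_root w.

Let n_gt0 : (0 < n)%N. Proof. exact: prim_order_gt0 w_prim. Qed.
Let n_neq0 : n%:R != 0 :> R[i]. Proof. by rewrite pnatr_eq0 -lt0n. Qed.
Let wn1 : w ^+ n = 1. Proof. exact: prim_expr_order. Qed.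

Lemma norm_prim_root : `|w| = 1.
Proof. by apply/eqP; rewrite -(pexpr_eq1 n_gt0) // -normrX wn1 normr1. Qed.

Lemma conjc_prim_root : conjc w = w^-1.
Proof. by apply/esym/mulr1_eq; rewrite -sqr_normc norm_prim_root expr1n. Qed.

Lemma normc_prim_root_expr k : Normc.normc (w ^+ k) = 1.
Proof.
by apply: (@complexI R); rewrite real_complex_normc normrX norm_prim_root expr1n.
Qed.

Lemma conjc_idft lambda k :
  conj_symmetric n lambda -> conjc (idft n w lambda k) = idft n w lambda k.
Proof.
move=> lambda_sym; rewrite /idft rmorphM fmorphV rmorph_nat rmorph_sum; congr (_ * _).
rewrite -(sum_opp_mod n (fun j => lambda j * w ^+ (j * k))); apply: eq_bigr => j _.
rewrite rmorphM lambda_sym // rmorphXn /= conjc_prim_root !exprM prim_expr_mod //.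
by rewrite unity_expr_subn ?(ltnW (ltn_ord j)) // exprVn.
Qed.

Lemma map_conjc_circulant_idft lambda :
  (map_mx conjc (circulant n (idft n w lambda)))^T =
  circulant n (idft n w (fun j => conjc (lambda j))).
Proof.
have row_conj : map_mx conjc (\row_(j < n) lambda j) = \row_j conjc (lambda j).
  by apply/rowP => j; rewrite !mxE.
rewrite !circulant_idftE // !map_mxM map_mxZ !map_fourier_mx map_diag_mx row_conj /=.
rewrite !conjc_inv conjc_nat conjc_prim_root invrK !trmx_mul linearZ /= tr_diag_mx.
by rewrite !tr_fourier_mx -scalemxAl -!scalemxAr mulmxA.
Qed.

Lemma circulant_idft_normal lambda :
  conj_symmetric n lambda -> normal_real_mx (circulant n (idft n w lambda)).
Proof.
move=> lambda_sym.
have real : map_mx conjc (circulant n (idft n w lambda)) = circulant n (idft n w lambda).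
  by apply/matrixP => i j; rewrite !mxE conjc_idft.
by rewrite /normal_real_mx -{2 3}real map_conjc_circulant_idft (circulant_idft_mulC w_prim).
Qed.

Lemma Re_idft_ge0 (lambda : nat -> R[i]) k :
  \sum_(j < n) Normc.normc (lambda j) <= 2 * complex.Re (lambda 0%N) ->
  0 <= complex.Re (idft n w lambda k).
Proof.
have nE : (n%:R^-1 : R[i]) = real_complex R n%:R^-1 by rewrite fmorphV rmorph_nat.
have Re_sum (f : 'I_n -> R[i]) :
    complex.Re (\sum_(j < n) f j) = \sum_(j < n) complex.Re (f j) by exact: raddf_sum.
rewrite /idft nE Re_mul_real Re_sum => sum_le.
apply: mulr_ge0; first by rewrite invr_ge0 ler0n.
pose o := Ordinal n_gt0.
have rest : - \sum_(j < n | j != o) Normc.normc (lambda j) <=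
    \sum_(j < n | j != o) complex.Re (lambda j * w ^+ (j * k)).
  rewrite -sumrN; apply: ler_sum => j _.
  have := normc_ge_absRe (lambda j * w ^+ (j * k)).
  by rewrite Normc.normcM normc_prim_root_expr mulr1 ler_norml => /andP[].
have := normc_ge_absRe (lambda 0%N); rewrite ler_norml => /andP[_ Re_le].
rewrite (bigD1 o) //= in sum_le; rewrite (bigD1 o) //= mul0n expr0 mulr1; lra.
Qed.

End ComplexCirculant.

(* [freq_pos h j] is the position in [eig_seq] of the eigenvalue put at frequency
   j: l0 at frequency 0, l1 at h, the k-th z at k + 1 and its conjugate at
   2h - (k + 1). *)
Definition freq_pos (h j : nat) : nat :=
  if j == 0%N then 0 else if j == h then 1 else if (j < h)%N then j.+1 else (3 * h - j)%N.

Section Layout.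
Variables (R : rcfType) (l0 l1 : R) (zs : seq R[i]).
Local Notation m := (size zs).
Local Notation h := (size zs).+1.

Definition eig_seq : seq R[i] := real_complex R l0 :: real_complex R l1 :: zs ++ map conjc zs.

Definition eig_layout (j : nat) : R[i] := nth 0 eig_seq (freq_pos h j).

Lemma size_eig_seq : size eig_seq = (h + h)%N.
Proof. by rewrite /= size_cat size_map; lia. Qed.

Lemma nth_eig_seq_zs k : (k < m)%N -> nth 0 eig_seq k.+2 = nth 0 zs k.
Proof. by move=> k_lt; rewrite /= nth_cat k_lt. Qed.

Lemma nth_eig_seq_conj k : (k < m)%N -> nth 0 eig_seq (k + m).+2 = conjc (nth 0 zs k).
Proof.
by move=> k_lt; rewrite /= nth_cat ltnNge leq_addl /= addnK (nth_map 0).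
Qed.

Lemma eig_layout_conj : conj_symmetric (h + h) eig_layout.
Proof.
rewrite /eig_layout => j j_lt.
have [->|j_neq0] := eqVneq j 0%N; first by rewrite subn0 modnn /= oppr0.
rewrite modn_small; last by lia.
have [->|j_neq_h] := eqVneq j h.
  by rewrite /freq_pos addnK /= eqxx /= oppr0.
have [j_lt_h|j_ge_h] := ltnP j h.
  have -> : freq_pos h (h + h - j) = (j.-1 + m).+2 by rewrite /freq_pos; repeat case: ifP; lia.
  have -> : freq_pos h j = j.-1.+2 by rewrite /freq_pos; repeat case: ifP; lia.
  by rewrite nth_eig_seq_conj ?nth_eig_seq_zs //; lia.
have -> : freq_pos h (h + h - j) = (h + h - j).-1.+2 by rewrite /freq_pos; repeat case: ifP; lia.
have -> : freq_pos h j = ((h + h - j).-1 + m).+2 by rewrite /freq_pos; repeat case: ifP; lia.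
by rewrite nth_eig_seq_conj ?nth_eig_seq_zs ?conjcK //; lia.
Qed.

Lemma big_eig_layout (T : Type) (idx : T) (op : Monoid.com_law idx) n (F : R[i] -> T) :
  n = (h + h)%N -> \big[op/idx]_(j < n) F (eig_layout j) = \big[op/idx]_(x <- eig_seq) F x.
Proof.
move=> ->; rewrite [RHS](big_nth 0) size_eig_seq big_mkord.
rewrite /eig_layout (@reindex_nat_inj _ _ op _ (freq_pos h) (F \o nth 0 eig_seq)) //.
  by move=> j; rewrite /freq_pos; repeat case: ifP; lia.
by move=> i j; rewrite /freq_pos; repeat case: ifP; lia.
Qed.

End Layout.

Theorem normal_centrosymmetric_nonneg_exists (R : rcfType) (l0 l1 : R) (zs : seq R[i]) n :
  n = ((size zs).+1 + (size zs).+1)%N -> 0 <= l0 -> l1 <= 0 ->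
  2 * \sum_(x <- zs) Normc.normc x <= l0 + l1 ->
  exists Q : 'M[R]_n, [/\ normal_real_mx Q, centrosymmetric Q, nonneg_mx Q &
    has_spectrum Q (eig_seq l0 l1 zs)].
Proof.
move=> n_eq l0_ge0 l1_le0 zs_le.
have n_gt0 : (0 < n)%N by rewrite n_eq.
have n_neq0 : n%:R != 0 :> R[i] by rewrite pnatr_eq0 -lt0n.
have [w w_prim] := closed_prim_root_exists n_gt0 n_neq0.
have [s s_half] := half_turn_perm_exists n_eq.
pose lambda := eig_layout l0 l1 zs.
have lambda_sym : conj_symmetric n lambda by rewrite n_eq; apply: eig_layout_conj.
pose C := circulant n (idft n w lambda).
pose Qc := row_perm s (col_perm s C).
have Qc_real : map_mx conjc Qc = Qc.
  by apply/matrixP => i j; rewrite !mxE conjc_idft.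
exists (map_mx (@complex.Re R) Qc); split.
- apply: (@normal_real_mx_map _ _ _ (real_complex R)).
  by rewrite map_mx_real_complex_Re //; apply/normal_real_mx_perm/circulant_idft_normal.
- apply: centrosymmetric_rev_ord => i j; rewrite !mxE; congr complex.Re.
  by have := circulant_half_turn (idft n w lambda) n_eq s_half i j; rewrite !mxE => ->.
- move=> i j; rewrite !mxE; apply: Re_idft_ge0 => //.
  rewrite (big_eig_layout _ _ _ _ n_eq) /eig_seq !big_cons big_cat big_map !normc_real.
  rewrite (eq_bigr _ (fun x _ => normc_conjc x)) ger0_norm // ler0_norm //=; lra.
- rewrite /has_spectrum map_mx_real_complex_Re // char_poly_perm.
  by rewrite char_poly_circulant_idft // (big_eig_layout _ _ _ (fun x => 'X - x%:P) n_eq).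
Qed.

Theorem theorem3p10 (R : realType) (s : nat) (l0 l1 : R) (z : 'I_(2 * s) -> R[i]) :
  (0 < s)%N -> 0 <= l0 -> l1 < 0 ->
  (forall j, 0 < complex.Im (z j)) ->
  0 <= l0 + l1 - 2 * \sum_(j < 2 * s) ComplexField.Normc.normc (z j) ->
  exists Q : 'M[R]_(4 * s + 2),
    [/\ normal_real_mx Q, centrosymmetric Q, nonneg_mx Q &
        has_spectrum Q ((real_complex R l0) :: (real_complex R l1) ::
          ([seq z j | j <- enum 'I_(2 * s)] ++ [seq conjc (z j) | j <- enum 'I_(2 * s)]))].
Proof.
move=> _ l0_ge0 l1_lt0 _ sum_le.
rewrite (map_comp conjc z).
apply: normal_centrosymmetric_nonneg_exists => //.
- by rewrite size_map size_enum_ord; lia.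
- exact: ltW.
- by rewrite big_map big_enum /= -subr_ge0.
Qed.
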